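(* Let $n$ DMUs, indexed by $J$, each use $m$ inputs (indexed by $I$) and produce $s$ outputs (indexed by $R$), with $n\ge 2(m+s)$ and all data $x_{ij}>0$, $y_{rj}>0$. Fix $o\in J$ and let $(Q_o^\star,P_o^\star,\pi^\star)$ be an optimal solution of the TAP program of the PT model $$\max\ \sum_{i\in I}Q_{io}\tau_o+\sum_{r\in R}P_{ro}\tau_o\quad\text{s.t.}\quad \sum_{j\in J}x_{ij}\pi_{jo}+Q_{io}x_{io}=x_{io}\ (i\in I),\ \ -\sum_{j\in J}y_{rj}\pi_{jo}+P_{ro}y_{ro}=-y_{ro}\ (r\in R),\ \ \pi_o,Q_o,P_o\ge0,$$ with goal price $\tau_o>0$. Define the benchmarks $\widehat x_{io}=\sum_{j\in J}x_{ij}\pi^\star_{jo}=x_{io}(1-Q^\star_{io})$ and $\widehat y_{ro}=\sum_{j\in J}y_{rj}\pi^\star_{jo}=y_{ro}(1+P^\star_{ro})$. Then assessing DMU-$o$ with the adjusted inputs $\widehat x_{io}$ and outputs $\widehat y_{ro}$ in place of $x_{io},y_{ro}$ by the PT model yields PT efficiency $\widehat E_o^{PT\star}=1$.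
   Context: The PT model's TVG (primal) program for an evaluated DMU with data $(x_{io},y_{ro})$ is $\min\sum_i v_{io}x_{io}-\sum_r u_{ro}y_{ro}$ s.t. $\sum_i v_{io}x_{ij}-\sum_r u_{ro}y_{rj}\ge0$ ($j\in J$), $x_{io}v_{io}\ge\tau_o$ ($i\in I$), $y_{ro}u_{ro}\ge\tau_o$ ($r\in R$), $v_o,u_o$ free. With an optimal solution $(v_o^\#,u_o^\#)$ for $\tau_o=1$, set $\bar t=1/\sum_i v^\#_{io}x_{io}$ and $(v_o^\star,u_o^\star)=\bar t(v_o^\#,u_o^\#)$; the PT efficiency is $E_o^{PT\star}=\sum_r u^\star_{ro}y_{ro}/\sum_i v^\star_{io}x_{io}$, equivalently $1$ minus (optimal total virtual gap)/(virtual input). *)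

From mathcomp Require Import all_boot all_order all_algebra.
Set Implicit Arguments. Unset Strict Implicit. Unset Printing Implicit Defensive.
Import Order.TTheory GRing.Theory Num.Theory.
Local Open Scope ring_scope.

Section PT.
Variables (R : realFieldType) (m s n : nat).
Implicit Types (X : 'I_m -> 'I_n -> R) (Y : 'I_s -> 'I_n -> R) (o : 'I_n).

Definition TAP_feasible X Y o (pi : 'I_n -> R) (Q : 'I_m -> R) (P : 'I_s -> R) :=
  [/\ (forall i, \sum_(j < n) X i j * pi j + Q i * X i o = X i o),
      (forall r, - (\sum_(j < n) Y r j * pi j) + P r * Y r o = - Y r o),
      (forall j, 0 <= pi j), (forall i, 0 <= Q i) & (forall r, 0 <= P r)].

Definition TAP_obj (tau : R) (Q : 'I_m -> R) (P : 'I_s -> R) :=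
  \sum_(i < m) Q i * tau + \sum_(r < s) P r * tau.

Definition TAP_optimal X Y o tau pi Q P :=
  TAP_feasible X Y o pi Q P /\
  forall pi' Q' P', TAP_feasible X Y o pi' Q' P' -> TAP_obj tau Q' P' <= TAP_obj tau Q P.

Definition TVG_feasible X Y o (tau : R) (v : 'I_m -> R) (u : 'I_s -> R) :=
  [/\ (forall j, 0 <= \sum_(i < m) v i * X i j - \sum_(r < s) u r * Y r j),
      (forall i, tau <= X i o * v i) & (forall r, tau <= Y r o * u r)].

Definition TVG_obj X Y o (v : 'I_m -> R) (u : 'I_s -> R) :=
  \sum_(i < m) v i * X i o - \sum_(r < s) u r * Y r o.

Definition TVG_optimal X Y o tau v u :=
  TVG_feasible X Y o tau v u /\
  forall v' u', TVG_feasible X Y o tau v' u' -> TVG_obj X Y o v u <= TVG_obj X Y o v' u'.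

(* PT efficiency of DMU o: from an optimal (v#,u#) for tau = 1, set
   tbar = 1 / sum_i v#_i x_io, vstar = tbar v#, ustar = tbar u#, E = (sum ustar y) / (sum vstar x).
   "The PT efficiency equals e" : an optimal solution exists (so E is defined)
   and every optimal solution yields the value e. *)
Definition PT_efficiency_is X Y o (e : R) :=
  (exists v u, TVG_optimal X Y o 1 v u) /\
  forall v u, TVG_optimal X Y o 1 v u ->
    let tbar := 1 / (\sum_(i < m) v i * X i o) in
    (\sum_(r < s) (tbar * u r) * Y r o) / (\sum_(i < m) (tbar * v i) * X i o) = e.

Definition adjX X o (pi : 'I_n -> R) : 'I_m -> 'I_n -> R :=
  fun i j => if j == o then \sum_(k < n) X i k * pi k else X i j.
Definition adjY Y o (pi : 'I_n -> R) : 'I_s -> 'I_n -> R :=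
  fun r j => if j == o then \sum_(k < n) Y r k * pi k else Y r j.

End PT.

From mathcomp Require Import all_boot all_order all_algebra.
From mathcomp Require Import ring lra.

(* The TVG objective of DMU o is nonnegative, being the constraint for j = o; so
   the adjusted DMU has efficiency 1 as soon as some feasible (v, u) closes its
   virtual gap: every optimal solution then has gap 0, i.e. equal virtual input
   and output.  If no such (v, u) existed, Farkas' lemma (proved by
   Fourier-Motzkin elimination) would give nonnegative multipliers
   (lambda, mu, gamma), sum gamma > 0, relating the data to the benchmarks; the
   TAP solution could then be moved to pi' = (pi + lambda) / (1 + mu), with Q and
   P raised accordingly, strictly increasing the TAP objective, contrary to the
   optimality of (pi, Q, P). *)

Set Implicit Arguments. Unset Strict Implicit. Unset Printing Implicit Defensive.
Import Order.TTheory GRing.Theory Num.Theory.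
Local Open Scope ring_scope.

Lemma exists_between (R : realDomainType) (I : finType) (P Q : pred I) (L U : I -> R) :
  (forall p q, P p -> Q q -> L p <= U q) ->
  exists t, (forall p, P p -> L p <= t) /\ (forall q, Q q -> t <= U q).
Proof.
move=> LU; pose t0 := \big[Num.min/0]_(q | Q q) U q.
exists (\big[Num.max/t0]_(p | P p) L p); split=> [p Pp|q Qq].
  exact: le_bigmax_cond.
by apply: bigmax_le => [|p Pp]; [exact: bigmin_le_cond | exact: LU].
Qed.

Lemma sum_mul_gt0 (R : realDomainType) (I : finType) (a w : I -> R) :
  (forall i, 0 <= a i) -> (forall i, 0 < w i) ->
  0 < \sum_i a i -> 0 < \sum_i a i * w i.
Proof.
move=> a_ge0 w_gt0 sum_gt0.
have [i ai_gt0|a_le0] := pickP (fun i => 0 < a i); last first.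
  by move: sum_gt0; rewrite ltNge sumr_le0 // => i _; rewrite leNgt a_le0.
rewrite (bigD1 i) //=; apply: ltr_pwDl; first exact: mulr_gt0.
by apply: sumr_ge0 => j _; apply: mulr_ge0; [exact: a_ge0 | exact: ltW].
Qed.

Section Farkas.
Variable R : realFieldType.

Section FourierMotzkin.
Variables (I : finType) (a : I -> R).

(* One Fourier-Motzkin step: the rows with [a k = 0] are kept, and each pair
   [a p > 0 > a q] gives the combination [- a q * row p + a p * row q], in which
   the coefficient [a] cancels. *)
Definition fm_comb (g : I -> R) (k : I + I * I) : R :=
  match k with
  | inl k => (a k == 0)%:R * g k
  | inr (p, q) => ((0 < a p) && (a q < 0))%:R * (- a q * g p + a p * g q)
  end.

Definition fm_dual (lam : I + I * I -> R) (k : I) : R :=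
  lam (inl k) * (a k == 0)%:R
  + \sum_q lam (inr (k, q)) * (((0 < a k) && (a q < 0))%:R * - a q)
  + \sum_p lam (inr (p, k)) * (((0 < a p) && (a k < 0))%:R * a p).

Lemma fm_comb_self k : fm_comb a k = 0.
Proof.
case: k => [k|[p q]] /=; last by rewrite [_ + _](_ : _ = 0) ?mulr0 //; ring.
by have [->|_] := eqVneq (a k) 0; rewrite ?mulr0 ?mul0r.
Qed.

Lemma fm_combB g h k :
  fm_comb (fun k => g k - h k) k = fm_comb g k - fm_comb h k.
Proof. by case: k => [k|[p q]] /=; ring. Qed.

Lemma fm_comb_sum (J : finType) (A : I -> J -> R) (w : J -> R) k :
  fm_comb (fun k => \sum_j A k j * w j) k = \sum_j fm_comb (A^~ j) k * w j.
Proof.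
case: k => [k|[p q]] /=.
  by rewrite mulr_sumr; apply: eq_bigr => j _; rewrite mulrA.
rewrite !mulr_sumr -big_split mulr_sumr; apply: eq_bigr => j _ /=; ring.
Qed.

Lemma fm_dual_ge0 lam k : (forall k', 0 <= lam k') -> 0 <= fm_dual lam k.
Proof.
move=> lam_ge0; rewrite /fm_dual; apply: addr_ge0; first apply: addr_ge0.
- by rewrite mulr_ge0 ?ler0n.
- apply: sumr_ge0 => q _; rewrite mulr_ge0 //.
  by case: andP => [[_ /ltW]|_]; rewrite ?mul0r // mul1r oppr_ge0.
- apply: sumr_ge0 => p _; rewrite mulr_ge0 //.
  by case: andP => [[/ltW]|_]; rewrite ?mul0r // mul1r.
Qed.

Lemma fm_dualE lam g :
  \sum_k lam k * fm_comb g k = \sum_k fm_dual lam k * g k.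
Proof.
rewrite big_sumType /=; under [RHS]eq_bigr do rewrite !mulrDl.
rewrite !big_split /= -addrA; congr (_ + _).
  by apply: eq_bigr => k _; rewrite mulrA.
pose c p q : R := ((0 < a p) && (a q < 0))%:R.
transitivity (\sum_p \sum_q (lam (inr (p, q)) * (c p q * - a q) * g p
                             + lam (inr (p, q)) * (c p q * a p) * g q)).
  by rewrite pair_bigA; apply: eq_bigr => -[p q] _ /=; ring.
rewrite (eq_bigr _ (fun p _ => big_split _ _ _ _ _)) big_split /=.
rewrite [in X in _ + X]exchange_big /=.
by congr (_ + _); apply: eq_bigr => k _; rewrite mulr_suml.
Qed.

Lemma fm_solve (c : I -> R) :
  (forall k, fm_comb c k <= 0) -> exists t, forall k, c k <= a k * t.
Proof.
move=> c_le0.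
have [|t [le_t ge_t]] := @exists_between _ I (fun p => 0 < a p) (fun q => a q < 0)
  (fun p => c p / a p) (fun q => c q / a q).
  move=> p q ap aq; have := c_le0 (inr (p, q)); rewrite /= ap aq /= mul1r => comb_le0.
  rewrite -subr_ge0 (_ : _ - _ = (a p * c q - a q * c p) / (a p * a q)).
    have num_le0 : a p * c q - a q * c p <= 0 by lra.
    by apply: mulr_le0; rewrite // invr_le0 ltW // pmulr_rlt0.
  by field; rewrite ltr0_neq0 // lt0r_neq0.
exists t => k; have [ak|ak|ak] := ltgtP (a k) 0.
- by rewrite mulrC -ler_ndivlMr // ge_t.
- by rewrite mulrC -ler_pdivrMr // le_t.
- by have := c_le0 (inl k); rewrite /= ak eqxx mul1r mul0r.
Qed.

End FourierMotzkin.

Lemma farkas_ord d (I : finType) (A : I -> 'I_d -> R) (b : I -> R) :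
  (exists w, forall k, b k <= \sum_i A k i * w i) \/
  exists lam : I -> R, [/\ forall k, 0 <= lam k,
    forall i, \sum_k lam k * A k i = 0 & 0 < \sum_k lam k * b k].
Proof.
elim: d => [|d IH] in I A b *.
  have [k bk_gt0|b_le0] := pickP (fun k => 0 < b k); [right | left].
    exists (fun k' => (k' == k)%:R); split=> [k'|i|]; first exact: ler0n.
      by case: i.
    by rewrite (bigD1 k) //= eqxx mul1r big1 ?addr0 // => k' /negbTE ->; rewrite mul0r.
  by exists (fun _ => 0) => k; rewrite big_ord0 leNgt b_le0.
pose a k := A k ord_max.
pose A' k' i := fm_comb a (fun k => A k (widen_ord (leqnSn d) i)) k'.
have [[w le_w]|[lam [lam_ge0 lamA lamb]]] := IH _ A' (fm_comb a b).
  pose c k := b k - \sum_i A k (widen_ord (leqnSn d) i) * w i.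
  have [|t le_t] := @fm_solve _ a c.
    by move=> k'; rewrite fm_combB fm_comb_sum subr_le0.
  left; exists (fun i => if insub (val i) is Some j then w j else t) => k.
  rewrite big_ord_recr /= insubF ?ltnn //.
  under eq_bigr do rewrite valK.
  by have := le_t k; rewrite -/(a k) /c; lra.
right; exists (fm_dual a lam); split=> [k|i|]; first exact: fm_dual_ge0.
  rewrite -fm_dualE; case: (unliftP ord_max i) => [j ->|->].
    have -> : lift ord_max j = widen_ord (leqnSn d) j by apply: val_inj; exact: lift_max.
    exact: lamA.
  by rewrite big1 // => k' _; rewrite fm_comb_self mulr0.
by rewrite -fm_dualE.
Qed.

Lemma farkas (I J : finType) (A : I -> J -> R) (b : I -> R) :
  (exists w, forall k, b k <= \sum_j A k j * w j) \/
  exists lam : I -> R, [/\ forall k, 0 <= lam k,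
    forall j, \sum_k lam k * A k j = 0 & 0 < \sum_k lam k * b k].
Proof.
have [[w le_w]|[lam [lam_ge0 lamA lamb]]] :=
  farkas_ord (fun k (c : 'I_#|J|) => A k (enum_val c)) b; [left | right].
  exists (fun j => w (enum_rank j)) => k.
  rewrite (reindex (@enum_val J predT)) /=; last first.
    by exists enum_rank => c _; rewrite ?enum_valK ?enum_rankK.
  by under eq_bigr do rewrite enum_valK; exact: le_w.
by exists lam; split=> // j; rewrite -(enum_rankK j).
Qed.

End Farkas.

Section PTEfficiency.
Variables (R : realFieldType) (m s n : nat).
Variables (X : 'I_m -> 'I_n -> R) (Y : 'I_s -> 'I_n -> R) (o : 'I_n).

Lemma PT_efficiency_is1_of_zero_gap : (0 < m)%N ->
  (exists v u, TVG_feasible X Y o 1 v u /\ TVG_obj X Y o v u <= 0) ->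
  PT_efficiency_is X Y o 1.
Proof.
move=> m_gt0 [v0 [u0 [feas0 obj0_le0]]].
have obj_ge0 v u : TVG_feasible X Y o 1 v u -> 0 <= TVG_obj X Y o v u by case=> /(_ o).
split=> [|v u [feas opt] /=].
  by exists v0, u0; split=> // v u /obj_ge0; exact: le_trans.
have virtual_out : \sum_r u r * Y r o = \sum_i v i * X i o.
  apply/eqP; rewrite eq_sym -subr_eq0 -/(TVG_obj X Y o v u) eq_le obj_ge0 // andbT.
  exact: le_trans (opt _ _ feas0) obj0_le0.
have virtual_in_gt0 : 0 < \sum_i v i * X i o.
  have [_ le_vX _] := feas.
  apply: (@lt_le_trans _ _ (\sum_(i < m) 1)); first by rewrite sumr_const card_ord ltr0n.
  by apply: ler_sum => i _; rewrite mulrC.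
under eq_bigr do rewrite -mulrA; under [in X in _ / X]eq_bigr do rewrite -mulrA.
rewrite -!mulr_sumr virtual_out.
by rewrite divff // mulf_neq0 ?div1r ?invr_eq0 ?gt_eqF.
Qed.

End PTEfficiency.

Section Benchmarks.
Variables (R : realFieldType) (m s n : nat).
Variables (X : 'I_m -> 'I_n -> R) (Y : 'I_s -> 'I_n -> R) (o : 'I_n) (pi : 'I_n -> R).
Hypothesis pi_ge0 : forall j, 0 <= pi j.

Definition xhat i := \sum_j X i j * pi j.
Definition yhat r := \sum_j Y r j * pi j.

Definition virtual_gap (v : 'I_m -> R) (u : 'I_s -> R) j :=
  \sum_i v i * X i j - \sum_r u r * Y r j.

Lemma benchmark_gap v u :
  \sum_i v i * xhat i - \sum_r u r * yhat r = \sum_j pi j * virtual_gap v u j.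
Proof.
rewrite /xhat /yhat /virtual_gap; under [RHS]eq_bigr do rewrite mulrBr !mulr_sumr.
rewrite sumrB; congr (_ - _); rewrite exchange_big /=;
  by apply: eq_bigr => k _; rewrite mulr_sumr; apply: eq_bigr => j _; ring.
Qed.

Lemma TVG_feasible_adjusted v u : (forall j, 0 <= virtual_gap v u j) ->
  (forall i, 1 <= xhat i * v i) -> (forall r, 1 <= yhat r * u r) ->
  TVG_feasible (adjX X o pi) (adjY Y o pi) o 1 v u.
Proof.
move=> gap_ge0 le_v le_u; split=> [j|i|r]; rewrite /adjX /adjY ?eqxx.
- case: eqP => _; last exact: gap_ge0.
  by rewrite benchmark_gap sumr_ge0 // => j' _; rewrite mulr_ge0.
- exact: le_v.
- exact: le_u.
Qed.

Lemma TVG_obj_adjusted v u :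
  TVG_obj (adjX X o pi) (adjY Y o pi) o v u = \sum_j pi j * virtual_gap v u j.
Proof. by rewrite /TVG_obj /adjX /adjY eqxx benchmark_gap. Qed.

Definition TAP_direction (lam : 'I_n -> R) (mu : R) (gam : 'I_m + 'I_s -> R) :=
  [/\ (forall j, 0 <= lam j) /\ 0 <= mu, forall c, 0 <= gam c,
    forall i, \sum_j X i j * lam j = (mu - gam (inl i)) * xhat i &
    forall r, \sum_j Y r j * lam j = (mu + gam (inr r)) * yhat r].

Definition gap_coef j (c : 'I_m + 'I_s) : R :=
  match c with inl i => X i j | inr r => - Y r j end.

Definition benchmark (c : 'I_m + 'I_s) : R :=
  match c with inl i => xhat i | inr r => yhat r end.

(* "(v, u) is TVG-feasible at the benchmarks with gap <= 0", as a system
   [rhs k <= \sum_c row k c * w c] in w = (v, u): one row [virtual_gap v u j >= 0]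
   per DMU of the original data, one row [- sum_j pi_j virtual_gap v u j >= 0],
   and the rows [xhat_i v_i >= 1], [yhat_r u_r >= 1]. *)
Definition zero_gap_row (k : ('I_n + 'I_1) + ('I_m + 'I_s)) (c : 'I_m + 'I_s) : R :=
  match k with
  | inl (inl j) => gap_coef j c
  | inl (inr _) => - \sum_j gap_coef j c * pi j
  | inr c' => if c == c' then benchmark c else 0
  end.

Definition zero_gap_rhs (k : ('I_n + 'I_1) + ('I_m + 'I_s)) : R :=
  if k is inr _ then 1 else 0.

Lemma sum_gap_coef j (w : 'I_m + 'I_s -> R) :
  \sum_c gap_coef j c * w c = virtual_gap (w \o inl) (w \o inr) j.
Proof.
rewrite big_sumType /virtual_gap /=; congr (_ + _); last rewrite -sumrN.
  by apply: eq_bigr => i _; rewrite mulrC.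
by apply: eq_bigr => r _; rewrite mulNr mulrC.
Qed.

Lemma zero_gap_of_solution (w : 'I_m + 'I_s -> R) :
  (forall k, zero_gap_rhs k <= \sum_c zero_gap_row k c * w c) ->
  TVG_feasible (adjX X o pi) (adjY Y o pi) o 1 (w \o inl) (w \o inr) /\
  TVG_obj (adjX X o pi) (adjY Y o pi) o (w \o inl) (w \o inr) <= 0.
Proof.
move=> le_w.
have bound_row c' : \sum_c zero_gap_row (inr c') c * w c = benchmark c' * w c'.
  rewrite (bigD1 c') //= eqxx big1 ?addr0 // => c /negbTE /= ->.
  by rewrite mul0r.
split.
  apply: TVG_feasible_adjusted => // [j|i|r].
  - by rewrite -sum_gap_coef; exact: (le_w (inl (inl j))).
  - by have := le_w (inr (inl i)); rewrite bound_row.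
  - by have := le_w (inr (inr r)); rewrite bound_row.
have objE : \sum_j pi j * virtual_gap (w \o inl) (w \o inr) j =
             \sum_c (\sum_j gap_coef j c * pi j) * w c.
  under eq_bigr do rewrite -sum_gap_coef mulr_sumr.
  rewrite exchange_big; apply: eq_bigr => c _ /=.
  by rewrite mulr_suml; apply: eq_bigr => j _; rewrite mulrCA mulrA.
rewrite TVG_obj_adjusted objE -oppr_ge0 -sumrN.
by under eq_bigr do rewrite -mulNr; exact: (le_w (inl (inr ord0))).
Qed.

Lemma TAP_direction_of_certificate (lam : ('I_n + 'I_1) + ('I_m + 'I_s) -> R) :
  (forall k, 0 <= lam k) -> (forall c, \sum_k lam k * zero_gap_row k c = 0) ->
  TAP_direction (fun j => lam (inl (inl j))) (lam (inl (inr ord0))) (lam \o inr).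
Proof.
move=> lam_ge0 lam_row.
have colE c : \sum_k lam k * zero_gap_row k c =
    \sum_j gap_coef j c * lam (inl (inl j))
    - lam (inl (inr ord0)) * \sum_j gap_coef j c * pi j + lam (inr c) * benchmark c.
  rewrite [LHS]big_sumType [in LHS]big_sumType big_ord1 /=; congr (_ + _ + _).
  - by apply: eq_bigr => j _; rewrite mulrC.
  - by rewrite mulrN.
  rewrite (bigD1 c) //= eqxx big1 ?addr0 // => c' /negbTE.
  by rewrite eq_sym => ->; rewrite mulr0.
split.
- by split=> [j|]; exact: lam_ge0.
- by move=> c; exact: lam_ge0.
- move=> i; have := lam_row (inl i); rewrite colE /= -/(xhat i) => col_i; lra.
- move=> r; have := lam_row (inr r); rewrite colE /=.
  under eq_bigr do rewrite mulNr; under [X in _ * X]eq_bigr do rewrite mulNr.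
  rewrite !sumrN -/(yhat r) => col_r; lra.
Qed.

Lemma zero_gap_adjusted :
  (forall lam mu gam, TAP_direction lam mu gam -> \sum_c gam c <= 0) ->
  exists v u, TVG_feasible (adjX X o pi) (adjY Y o pi) o 1 v u /\
              TVG_obj (adjX X o pi) (adjY Y o pi) o v u <= 0.
Proof.
move=> no_direction.
have [[w le_w]|[lam [lam_ge0 lam_row lam_rhs]]] := farkas zero_gap_row zero_gap_rhs.
  by exists (w \o inl), (w \o inr); exact: zero_gap_of_solution.
have gainE : \sum_k lam k * zero_gap_rhs k = \sum_c lam (inr c).
  rewrite big_sumType /= big1 ?add0r => [|k _]; last by rewrite mulr0.
  by apply: eq_bigr => c _; rewrite mulr1.
have := no_direction _ _ _ (TAP_direction_of_certificate lam_ge0 lam_row).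
by rewrite leNgt -gainE lam_rhs.
Qed.

End Benchmarks.

Section TAPOptimal.
Variables (R : realFieldType) (m s n : nat).
Variables (X : 'I_m -> 'I_n -> R) (Y : 'I_s -> 'I_n -> R) (o : 'I_n).
Variables (tau : R) (pi : 'I_n -> R) (Q : 'I_m -> R) (P : 'I_s -> R).
Hypotheses (X_gt0 : forall i j, 0 < X i j) (Y_gt0 : forall r j, 0 < Y r j).
Hypotheses (s_gt0 : (0 < s)%N) (tau_gt0 : 0 < tau).
Hypothesis TAP_opt : TAP_optimal X Y o tau pi Q P.

Lemma TAP_pi_ge0 j : 0 <= pi j.
Proof. by have [[_ _ ->]] := TAP_opt. Qed.

Lemma TAP_P_ge0 r : 0 <= P r.
Proof. by have [[_ _ _ _ ->]] := TAP_opt. Qed.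

Lemma xhat_TAP i : xhat X pi i = X i o * (1 - Q i).
Proof. by have [[/(_ i) feas_i _ _ _ _] _] := TAP_opt; rewrite /xhat; lra. Qed.

Lemma yhat_TAP r : yhat Y pi r = Y r o * (1 + P r).
Proof. by have [[_ /(_ r) feas_r _ _ _] _] := TAP_opt; rewrite /yhat; lra. Qed.

Lemma TAP_exists_pi_gt0 : exists j, 0 < pi j.
Proof.
have r0 := Ordinal s_gt0.
have : 0 < yhat Y pi r0 by rewrite yhat_TAP mulr_gt0 // ltr_pwDl ?TAP_P_ge0.
have [j pij_gt0|pi_le0] := pickP (fun j => 0 < pi j); first by exists j.
rewrite /yhat big1 ?ltxx // => j _.
by rewrite (@le_anti _ _ (pi j) 0) ?mulr0 // TAP_pi_ge0 leNgt pi_le0.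
Qed.

Lemma TAP_Q_lt1 i : Q i < 1.
Proof.
have [j pij_gt0] := TAP_exists_pi_gt0.
have xhat_gt0 : 0 < xhat X pi i.
  rewrite /xhat (bigD1 j) //=; apply: ltr_pwDl; first exact: mulr_gt0.
  by apply: sumr_ge0 => k _; apply: mulr_ge0; [exact: ltW | exact: TAP_pi_ge0].
by move: xhat_gt0; rewrite xhat_TAP pmulr_rgt0 // subr_gt0.
Qed.

Section Direction.
Variables (lam : 'I_n -> R) (mu : R) (gam : 'I_m + 'I_s -> R).
Hypothesis dir : TAP_direction X Y pi lam mu gam.

Let eps := (1 + mu)^-1.
Let pi' j := eps * (pi j + lam j).
Let Q' i := Q i + eps * gam (inl i) * (1 - Q i).
Let P' r := P r + eps * gam (inr r) * (1 + P r).
Let weight c := match c with inl i => 1 - Q i | inr r => 1 + P r end.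

Let eps_gt0 : 0 < eps.
Proof. by have [[_ mu_ge0] _ _ _] := dir; rewrite invr_gt0 ltr_pwDl. Qed.

Let weight_gt0 c : 0 < weight c.
Proof. by case: c => [i|r] /=; rewrite ?subr_gt0 ?TAP_Q_lt1 ?ltr_pwDl ?TAP_P_ge0. Qed.

Lemma TAP_feasible_step : TAP_feasible X Y o pi' Q' P'.
Proof.
have [[lam_ge0 mu_ge0] gam_ge0 dirX dirY] := dir.
have [[_ _ _ Q_ge0 _] _] := TAP_opt.
have mu1_neq0 : 1 + mu != 0 by rewrite gt_eqF // ltr_pwDl.
have sum_step (f : 'I_n -> R) :
    \sum_j f j * pi' j = eps * (\sum_j f j * pi j + \sum_j f j * lam j).
  by rewrite mulrDr !mulr_sumr -big_split; apply: eq_bigr => j _; rewrite mulrCA !mulrDr.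
split=> [i|r|j|i|r].
- by rewrite sum_step dirX -/(xhat X pi i) xhat_TAP /Q' /eps; field.
- by rewrite sum_step dirY -/(yhat Y pi r) yhat_TAP /P' /eps; field.
- exact: mulr_ge0 (ltW eps_gt0) (addr_ge0 (TAP_pi_ge0 j) (lam_ge0 j)).
- apply: addr_ge0 (Q_ge0 i) (mulr_ge0 (mulr_ge0 (ltW eps_gt0) (gam_ge0 _)) _).
  by rewrite subr_ge0 ltW ?TAP_Q_lt1.
- apply: addr_ge0 (TAP_P_ge0 r) (mulr_ge0 (mulr_ge0 (ltW eps_gt0) (gam_ge0 _)) _).
  by rewrite ltW // ltr_pwDl ?TAP_P_ge0.
Qed.

Lemma TAP_obj_step :
  TAP_obj tau Q' P' = TAP_obj tau Q P + tau * eps * \sum_c gam c * weight c.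
Proof.
rewrite /TAP_obj big_sumType /= mulrDr !mulr_sumr addrACA -!big_split /=.
by congr (_ + _); apply: eq_bigr => k _; rewrite /Q' /P'; ring.
Qed.

Lemma TAP_direction_gain_le0 : \sum_c gam c <= 0.
Proof.
have [_ gam_ge0 _ _] := dir.
have := TAP_opt.2 _ _ _ TAP_feasible_step.
rewrite TAP_obj_step gerDl pmulr_rle0 ?mulr_gt0 // !leNgt.
by apply: contra; exact: sum_mul_gt0.
Qed.

End Direction.

End TAPOptimal.

Theorem theorem2 (R : realFieldType) (m s n : nat)
  (X : 'I_m -> 'I_n -> R) (Y : 'I_s -> 'I_n -> R) (o : 'I_n) (tau : R)
  (pi : 'I_n -> R) (Q : 'I_m -> R) (P : 'I_s -> R) :
  (0 < m)%N -> (0 < s)%N -> (2 * (m + s) <= n)%N ->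
  (forall i j, 0 < X i j) -> (forall r j, 0 < Y r j) ->
  0 < tau ->
  TAP_optimal X Y o tau pi Q P ->
  PT_efficiency_is (adjX X o pi) (adjY Y o pi) o 1.
Proof.
move=> m_gt0 s_gt0 _ X_gt0 Y_gt0 tau_gt0 TAP_opt.
apply: PT_efficiency_is1_of_zero_gap m_gt0 _.
apply: zero_gap_adjusted (TAP_pi_ge0 TAP_opt) _ => lam mu gam dir.
exact: (TAP_direction_gain_le0 X_gt0 Y_gt0 s_gt0 tau_gt0 TAP_opt dir).
Qed.
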